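(* Let $V$ be a vector space of dimension $2r$ ($r\ge1$) over $\mathbb{F}_2$ with nondegenerate quadratic form $Q$. Then $V$ has a symmetric basis if and only if either $Q$ is hyperbolic and $r\equiv 0$ or $1\pmod 4$, or $Q$ is elliptic and $r\equiv 2$ or $3\pmod 4$.
   Context: The associated bilinear form of $Q$ is $B(u,v)=Q(u+v)-Q(u)-Q(v)$, and $Q$ is nondegenerate if $B$ is. $Q$ is hyperbolic if $V$ has a basis $e_1,\dots,e_r,f_1,\dots,f_r$ with $Q(e_i)=Q(f_i)=0$, $B(e_i,e_j)=B(f_i,f_j)=0$, $B(e_i,f_j)=\delta_{ij}$; it is elliptic if $V$ has a basis $e_1,\dots,e_{r-1},f_1,\dots,f_{r-1},x,y$ with the same relations among the $e_i,f_i$, all $e_i,f_i$ orthogonal to $x,y$, $Q(x)=Q(y)=1$, $B(x,y)=1$. A basis $\{v_1,\dots,v_{2r}\}$ is symmetric if $Q(v_i)=0$ for all $i$ and $B(v_i,v_j)=1$ for all $i\ne j$. *)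

From HB Require Import structures.
From mathcomp Require Import all_boot all_order all_algebra.
Set Implicit Arguments. Unset Strict Implicit. Unset Printing Implicit Defensive.
Import GRing.Theory.
Local Open Scope ring_scope.

Section QuadForms.
Variables (K : fieldType) (V : vectType K).

Definition assoc_bilin (Q : V -> K) (u v : V) : K := Q (u + v) - Q u - Q v.

(* Q is a quadratic form: Q(a v) = a^2 Q(v) and B is bilinear
   (linearity in the first argument; B is symmetric by definition) *)
Definition is_quadratic_form (Q : V -> K) : Prop :=
  (forall (a : K) (v : V), Q (a *: v) = a ^+ 2 * Q v) /\
  (forall u v w : V, assoc_bilin Q (u + v) w = assoc_bilin Q u w + assoc_bilin Q v w) /\
  (forall (a : K) (u v : V), assoc_bilin Q (a *: u) v = a * assoc_bilin Q u v).

Definition qf_nondegenerate (Q : V -> K) : Prop :=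
  forall u : V, (forall v : V, assoc_bilin Q u v = 0) -> u = 0.

Definition qf_hyperbolic (Q : V -> K) : Prop :=
  exists (n : nat) (e f : 'I_n -> V),
    basis_of fullv ([seq e i | i <- enum 'I_n] ++ [seq f i | i <- enum 'I_n]) /\
    forall i j : 'I_n,
      [/\ Q (e i) = 0, Q (f i) = 0,
          assoc_bilin Q (e i) (e j) = 0, assoc_bilin Q (f i) (f j) = 0 &
          assoc_bilin Q (e i) (f j) = (i == j)%:R].

Definition qf_elliptic (Q : V -> K) : Prop :=
  exists (n : nat) (e f : 'I_n -> V) (x y : V),
    basis_of fullv ([seq e i | i <- enum 'I_n] ++ [seq f i | i <- enum 'I_n] ++ [:: x; y]) /\
    (forall i j : 'I_n,
      [/\ Q (e i) = 0, Q (f i) = 0,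
          assoc_bilin Q (e i) (e j) = 0, assoc_bilin Q (f i) (f j) = 0 &
          assoc_bilin Q (e i) (f j) = (i == j)%:R]) /\
    (forall i : 'I_n,
      [/\ assoc_bilin Q (e i) x = 0, assoc_bilin Q (e i) y = 0,
          assoc_bilin Q (f i) x = 0 & assoc_bilin Q (f i) y = 0]) /\
    Q x = 1 /\ Q y = 1 /\ assoc_bilin Q x y = 1.

Definition symmetric_basis (Q : V -> K) (s : seq V) : Prop :=
  basis_of fullv s /\
  (forall i, (i < size s)%N -> Q s`_i = 0) /\
  (forall i j, (i < size s)%N -> (j < size s)%N -> i != j -> assoc_bilin Q s`_i s`_j = 1).

Definition has_symmetric_basis (Q : V -> K) : Prop :=
  exists s : seq V, symmetric_basis Q s.

End QuadForms.

From HB Require Import structures.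
From mathcomp Require Import all_boot all_order all_algebra zify.
Import GRing.Theory.
Local Open Scope ring_scope.

(* Over F_2 the associated form B is alternating (B v v = 0).  A symmetric basis
   can be unfolded two vectors at a time: v |-> v + v_1 + v_2 makes the remaining
   vectors orthogonal to v_1, v_2 and flips their Q-value, so one obtains a
   symplectic basis of r pairs (a_k, b_k), B(a_k, b_k) = 1, with
   Q(a_k) = Q(b_k) alternating 0, 1, 0, 1, ...; the step is reversible.  Two pairs
   with equal Q-value can be traded for two pairs with the other value, so a
   symplectic basis of one type can be rebuilt with any type having the same
   number of Q = 1 pairs modulo 2.  The alternating type has floor(r/2) such pairs,
   odd exactly when r = 2, 3 (mod 4), and hyperbolic and elliptic bases are the
   types with zero and one such pair. *)

Lemma F2_cases (a : 'F_2) : a = 0 \/ a = 1.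
Proof. by case: a => [[|[|]]] //= H; [left|right]; apply: val_inj. Qed.

Lemma F2_addrr (a : 'F_2) : a + a = 0.
Proof. by case: (F2_cases a) => ->; apply/eqP. Qed.

Lemma F2_oppr (a : 'F_2) : - a = a.
Proof. by rewrite -[LHS]add0r -(F2_addrr a) addrK. Qed.

Lemma map_nth_enum_ord {T T' : Type} (x0 : T) (h : T -> T') s :
  [seq h (nth x0 s i) | i : 'I_(size s) <- enum 'I_(size s)] = map h s.
Proof. by rewrite -[in RHS](mkseq_nth x0 s) /mkseq -val_enum_ord -!map_comp. Qed.

Fixpoint alternating (c : bool) n :=
  if n is n'.+1 then c :: alternating (~~ c) n' else [::].

Lemma size_alternating c n : size (alternating c n) = n.
Proof. by elim: n c => //= n IH c; rewrite IH. Qed.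

Section QuadraticFormF2.
Context {V : vectType 'F_2} {Q : V -> 'F_2}.
Hypothesis qfQ : is_quadratic_form Q.
Local Notation B := (assoc_bilin Q).

Lemma bilinC u v : B u v = B v u.
Proof. by rewrite /assoc_bilin [u + v]addrC addrAC. Qed.

Lemma bilinDl u v w : B (u + v) w = B u w + B v w.
Proof. by case: qfQ => _ [+ _]; apply. Qed.

Lemma bilinDr u v w : B w (u + v) = B w u + B w v.
Proof. by rewrite !(bilinC w) bilinDl. Qed.

Lemma bilinZl a u v : B (a *: u) v = a * B u v.
Proof. by case: qfQ => _ [_]; apply. Qed.

Lemma bilin0l v : B 0 v = 0.
Proof. by rewrite -[0 in LHS](scale0r 0) bilinZl mul0r. Qed.

Lemma bilin_suml I (r : seq I) (P : pred I) (F : I -> V) w :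
  B (\sum_(i <- r | P i) F i) w = \sum_(i <- r | P i) B (F i) w.
Proof.
exact: (big_morph (B^~ w) (fun u v => bilinDl u v w) (bilin0l w)).
Qed.

Lemma bilinxx v : B v v = 0.
Proof.
rewrite /assoc_bilin -mulr2n -scaler_nat; case: qfQ => -> _.
by rewrite [2%:R]F2_addrr expr0n mul0r sub0r F2_oppr F2_addrr.
Qed.

Lemma quadD u v : Q (u + v) = Q u + Q v + B u v.
Proof. by rewrite /assoc_bilin -[_ - Q u - Q v]addrA -opprD addrC addNKr. Qed.

Ltac f2_eval :=
  rewrite ?quadD ?bilinDl ?bilinDr ?bilinxx;
  repeat match goal with
  | H : B ?u ?v = _ |- context [B ?u ?v] => rewrite H
  | H : B ?u ?v = _ |- context [B ?v ?u] => rewrite (bilinC v u) H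
  | H : Q ?u = _ |- context [Q ?u] => rewrite H
  end.

Definition orth_pair w (p : V * V) := (B w p.1 == 0) && (B w p.2 == 0).

Fixpoint symplectic (P : seq (V * V)) :=
  if P is p :: P' then
    [&& B p.1 p.2 == 1, all (orth_pair p.1) P', all (orth_pair p.2) P' & symplectic P']
  else true.

Definition of_types (t : seq bool) (P : seq (V * V)) :=
  all2 (fun (c : bool) p => (Q p.1 == c%:R) && (Q p.2 == c%:R)) t P.

(* The orthogonality clause is what lets [retype_cons] act on a tail. *)
Definition retype (t t' : seq bool) := forall P, symplectic P -> of_types t P ->
  exists P', [/\ symplectic P', of_types t' P'
               & forall w, all (orth_pair w) P -> all (orth_pair w) P'].

Lemma orth_pairD w w' P :
  all (orth_pair w) P -> all (orth_pair w') P -> all (orth_pair (w + w')) P.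
Proof.
move=> /allP o /allP o'; apply/allP => p pP.
case/andP: (o p pP) => /eqP ? /eqP ?; case/andP: (o' p pP) => /eqP ? /eqP ?.
by apply/andP; split; f2_eval; rewrite addr0.
Qed.

Lemma retype_trans t1 t2 t3 : retype t1 t2 -> retype t2 t3 -> retype t1 t3.
Proof.
move=> r12 r23 P sP tP; have [P2 [sP2 tP2 oP2]] := r12 P sP tP.
have [P3 [sP3 tP3 oP3]] := r23 P2 sP2 tP2.
by exists P3; split=> // w /oP2 /oP3.
Qed.

Lemma retype_cons c t t' : retype t t' -> retype (c :: t) (c :: t').
Proof.
move=> tt' [|p P] //= /and4P[Bp op1 op2 sP] /andP[cp tP].
have [P' [sP' tP' oP']] := tt' P sP tP.
exists (p :: P'); split=> /=; first by rewrite Bp !oP'.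
  by rewrite cp.
by move=> w /andP[-> /oP'].
Qed.

Lemma orth_pairsC p q :
  orth_pair p.1 q && orth_pair p.2 q = orth_pair q.1 p && orth_pair q.2 p.
Proof. by rewrite /orth_pair !(bilinC p.1) !(bilinC p.2) andbACA. Qed.

Lemma retype_swap c d t : retype [:: c, d & t] [:: d, c & t].
Proof.
move=> [|p [|q P]] //; first by rewrite /of_types /= andbF.
move=> /= /and4P[Bp /andP[pq1 op1] /andP[pq2 op2] /and4P[Bq oq1 oq2 sP]].
move=> /and3P[cp dq tP]; exists [:: q, p & P]; split=> /=.
- have /andP[-> ->] : orth_pair q.1 p && orth_pair q.2 p by rewrite -orth_pairsC pq1.
  by rewrite Bp Bq op1 op2 oq1 oq2.
- by rewrite cp dq.
- by move=> w /and3P[-> -> ->].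
Qed.

Lemma retype_flip c t : retype [:: c, c & t] [:: ~~ c, ~~ c & t].
Proof.
move=> [|[a1 b1] [|[a2 b2] P]] //; first by rewrite /of_types /= andbF.
move=> /= /and4P[/eqP B1 /andP[/andP[/eqP ? /eqP ?] oa1] /andP[/andP[/eqP ? /eqP ?] ob1]].
move=> /and4P[/eqP B2 oa2 ob2 sP] /and3P[/andP[/eqP Qa1 /eqP Qb1] /andP[/eqP Qa2 /eqP Qb2] tP].
have orth_flip w : orth_pair w (a1, b1) -> orth_pair w (a2, b2) ->
    orth_pair w (a1 + b1 + a2, a1 + b1 + b2) && orth_pair w (a2 + b2 + a1, a2 + b2 + b1).
  by move=> /andP[/eqP ? /eqP ?] /andP[/eqP ? /eqP ?]; rewrite /orth_pair /=; f2_eval.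
(* Adding a1 + b1 (whose Q-value is 1) to the second pair and a2 + b2 to the
   first flips every Q-value and keeps all bilinear relations. *)
exists [:: (a1 + b1 + a2, a1 + b1 + b2), (a2 + b2 + a1, a2 + b2 + b1) & P]; split=> /=.
- by rewrite sP !orth_pairD // /orth_pair /=; f2_eval.
- by apply/and3P; split=> //; case: c Qa1 Qb1 Qa2 Qb2 => ? ? ? ?; f2_eval.
- by move=> w /and3P[o1 o2 ->]; have /andP[-> ->] := orth_flip w o1 o2.
Qed.

Lemma retype_parity n t t' : size t = n -> size t' = n ->
  odd (count id t) = odd (count id t') -> retype t t'.
Proof.
elim: n t t' => [|n IH] [|x u] [|y u'] //=; first by move=> _ _ _ P *; exists P.
move=> [su] [su']; rewrite !oddD !oddb.
have [<- /addbI/(IH _ _ su su')/retype_cons//|/negPf yx] := eqVneq y x.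
have {yx} -> : y = ~~ x by case: x y yx => [] [].
case: u su => [|z w] /= su; first by rewrite -su in su'; case: u' su' => // _; case: x.
rewrite oddD oddb.
have [-> par|/negPf zx] := eqVneq z x.
  apply: (retype_trans _ _ _ (retype_flip x w)); apply/retype_cons/(IH (~~ x :: w) u' su su').
  by move: par; rewrite /= oddD oddb; case: x (odd _) (odd _) => [] [] [].
have {zx} -> : z = ~~ x by case: x z zx => [] [].
move=> par; apply: (retype_trans _ _ _ (retype_swap x _ w)).
apply/retype_cons/(IH (x :: w) u' su su').
by move: par; rewrite /= oddD oddb; case: x (odd _) (odd _) => [] [] [].
Qed.

Lemma of_types_size {t P} : of_types t P -> size t = size P.
Proof. by rewrite /of_types all2E => /andP[/eqP]. Qed.

Lemma size_basis_of {U : {vspace V}} {X : seq V} : basis_of U X -> size X = \dim U.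
Proof. by case/andP => /eqP <- /eqnP. Qed.

Lemma basis_of_free (X : seq V) :
  free X -> size X = \dim (fullv : {vspace V}) -> basis_of fullv X.
Proof. by move=> freeX sizeX; rewrite basisEfree freeX subvf sizeX leqnn. Qed.

Lemma bilin_span0 w X v :
  all (fun x => B x w == 0) X -> v \in <<X>>%VS -> B v w = 0.
Proof.
move=> /allP X0 /(coord_span (X := in_tuple X)) ->; rewrite bilin_suml big1 // => i _.
by rewrite bilinZl (eqP (X0 _ (mem_nth 0 _))) ?mulr0.
Qed.

Lemma orth_pair_vecs w P :
  all (orth_pair w) P -> all (fun x => B x w == 0) (map fst P ++ map snd P).
Proof.
move=> /allP wP; rewrite all_cat !all_map; apply/andP; split; apply/allP => p /wP.
  by case/andP; rewrite bilinC.
by case/andP => _; rewrite bilinC.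
Qed.

Lemma free_symplectic P : symplectic P -> free (map fst P ++ map snd P).
Proof.
elim: P => [|[a b] P IH] /=; first by rewrite nil_free.
move=> /and4P[/eqP Bab /orth_pair_vecs oa /orth_pair_vecs ob /IH freeP].
rewrite (perm_free (_ : perm_eq _ (a :: b :: map fst P ++ map snd P))); last first.
  by rewrite perm_cons -cat1s perm_catCA.
rewrite !free_cons freeP andbT; apply/andP; split; apply/negP.
  by move=> /(bilin_span0 b); rewrite /= bilinxx eqxx ob Bab => /(_ isT)/eqP; rewrite oner_eq0.
by move=> /(bilin_span0 a); rewrite bilinC oa Bab => /(_ isT)/eqP; rewrite oner_eq0.
Qed.

Definition sym_family (c : bool) (s : seq V) :=
  all (fun v => Q v == c%:R) s && pairwise (fun u v => B u v == 1) s.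

Lemma sym_familyP (c : bool) s : reflect
  ((forall i, (i < size s)%N -> Q s`_i = c%:R) /\
   (forall i j, (i < size s)%N -> (j < size s)%N -> i != j -> B s`_i s`_j = 1))
  (sym_family c s).
Proof.
apply: (iffP andP) => [[/(all_nthP 0) Qs /(pairwiseP 0) Bs] | [Qs Bs]]; split.
- by move=> i /Qs/eqP.
- move=> i j si sj; case: ltngtP => // [ij|ji] _; first exact/eqP/Bs.
  by rewrite bilinC; apply/eqP/Bs.
- by apply/(all_nthP 0) => i /Qs ->.
- by apply/(pairwiseP 0) => i j si sj ij; rewrite Bs // ltn_eqF.
Qed.

Lemma free_sym_family (c : bool) s : sym_family c s -> ~~ odd (size s) -> free s.
Proof.
(* Pairing sum_i k_i s_i = 0 with s_j gives k_j = sum_i k_i for every j. *)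
move=> /sym_familyP[_ Bs] even_s; rewrite -[s]/(tval (in_tuple s)).
apply/freeP => k sum0; pose S := \sum_(i < size s) k i.
have kS j : k j = S.
  have := congr1 (B^~ s`_j) sum0; rewrite /= bilin_suml bilin0l (bigD1 j) //=.
  rewrite bilinZl bilinxx mulr0 add0r (eq_bigr k) => [sum_k0|i ij].
    by rewrite /S (bigD1 j) //= sum_k0 addr0.
  by rewrite bilinZl Bs ?mulr1.
have S0 : S = 0.
  rewrite {1}/S (eq_bigr (fun=> S)) // sumr_const card_ord.
  rewrite -(odd_double_half (size s)) (negbTE even_s) add0n -mul2n mulrnA.
  by rewrite mulr2n F2_addrr mul0rn.
by move=> i; rewrite kS.
Qed.

Lemma sym_family_cons2 (c : bool) a b s :
  sym_family c [:: a, b & s] =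
  [&& Q a == c%:R, Q b == c%:R, B a b == 1 &
  [&& all (fun v => B a v == 1) s, all (fun v => B b v == 1) s & sym_family c s]].
Proof. by rewrite /sym_family /= -!andbA; do !bool_congr. Qed.

Lemma addvv (v : V) : v + v = 0.
Proof. by rewrite -[v]scale1r -scalerDl F2_addrr scale0r. Qed.

Definition orth_seq w (s : seq V) := all (fun v => B w v == 0) s.

Lemma sym_family_shift {c : bool} {a b : V} {s} :
  Q a = c%:R -> Q b = c%:R -> B a b = 1 ->
  [&& all (fun v => B a v == 1) s, all (fun v => B b v == 1) s & sym_family c s] =
  [&& orth_seq a [seq v + (a + b) | v <- s], orth_seq b [seq v + (a + b) | v <- s]
    & sym_family (~~ c) [seq v + (a + b) | v <- s]].
Proof.
move=> Qa Qb Bab.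
have shift_vec v : [&& B a v == 1, B b v == 1 & Q v == c%:R] =
    [&& B a (v + (a + b)) == 0, B b (v + (a + b)) == 0 & Q (v + (a + b)) == (~~ c)%:R].
  f2_eval; rewrite !(bilinC v).
  by case: (F2_cases (B a v)) => ->; case: (F2_cases (B b v)) => ->;
    case: (F2_cases (Q v)) => ->; case: c {Qa Qb}.
have shift_pair u v : B a u = 1 -> B b u = 1 -> B a v = 1 -> B b v = 1 ->
    B (u + (a + b)) (v + (a + b)) = B u v.
  by move=> *; f2_eval; case: (F2_cases (B u v)) => ->; apply/eqP.
rewrite /orth_seq /sym_family !all_map pairwise_map !andbA -!all_predI.
set P := predI _ _; set P' := predI _ _.
have PP' : P =1 P' by move=> v; rewrite /P /P' /= -!andbA shift_vec.
rewrite -(eq_all PP'); apply: andb_id2l => sP; apply: eq_in_pairwise sP => u v.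
by move=> /andP[/andP[/eqP ? /eqP ?] _] /andP[/andP[/eqP ? /eqP ?] _] /=; rewrite shift_pair.
Qed.

Lemma orth_seq_shift w a b s : B w a = 0 -> B w b = 0 -> orth_seq w s ->
  orth_seq w [seq v + (a + b) | v <- s].
Proof.
by move=> wa wb /allP ws; rewrite /orth_seq all_map; apply/allP => v /ws /eqP wv /=; f2_eval.
Qed.

Lemma sym_family_pairs (c : bool) n s : size s = (2 * n)%N -> sym_family c s ->
  exists P, [/\ symplectic P, of_types (alternating c n) P
              & forall w, orth_seq w s -> all (orth_pair w) P].
Proof.
elim: n c s => [|n IH] c [|a [|b s]] //; first by move=> _ _; exists [::].
  by rewrite /= mulnS !addSn => -[].
rewrite /= mulnS !addSn add0n => -[hs].
rewrite sym_family_cons2 => /and4P[/eqP Qa /eqP Qb /eqP Bab].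
rewrite (sym_family_shift Qa Qb Bab) => /and3P[oa ob fs].
have [P [sP tP oP]] := IH (~~ c) _ (etrans (size_map _ _) hs) fs.
exists ((a, b) :: P); split=> /=.
- by rewrite Bab eqxx !oP.
- by rewrite Qa Qb !eqxx.
- move=> w /and3P[/eqP wa /eqP wb ws]; rewrite /orth_pair /= wa wb eqxx /=.
  exact/oP/orth_seq_shift.
Qed.

Lemma pairs_sym_family (c : bool) P :
  symplectic P -> of_types (alternating c (size P)) P ->
  exists s, [/\ size s = (2 * size P)%N, sym_family c s
              & forall w, all (orth_pair w) P -> orth_seq w s].
Proof.
elim: P c => [|[a b] P IH] c /=; first by exists [::].
move=> /and4P[/eqP Bab oa ob sP] /andP[/andP[/eqP Qa /eqP Qb] tP].
have [s [hs fs os]] := IH (~~ c) sP tP.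
have shiftK : [seq v + (a + b) | v <- [seq v + (a + b) | v <- s]] = s.
  by rewrite -map_comp -[RHS]map_id; apply: eq_map => v /=; rewrite -addrA addvv addr0.
exists [:: a, b & [seq v + (a + b) | v <- s]]; split.
- by rewrite /= size_map hs mulnS.
- by rewrite sym_family_cons2 Qa Qb Bab !eqxx (sym_family_shift Qa Qb Bab) shiftK fs !os.
- move=> w /andP[/andP[/eqP wa /eqP wb] wP]; rewrite /orth_seq /= wa wb eqxx /=.
  exact/orth_seq_shift/os.
Qed.

Lemma symplecticP P : reflect
  (forall i j, (i < size P)%N -> (j < size P)%N ->
     [/\ B (P`_i).1 (P`_j).1 = 0, B (P`_i).2 (P`_j).2 = 0 & B (P`_i).1 (P`_j).2 = (i == j)%:R])
  (symplectic P).
Proof.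
apply: (iffP idP).
  elim: P => [|p P IH] //= /and4P[/eqP Bp /(all_nthP 0) o1 /(all_nthP 0) o2 sP].
  case=> [|i] [|j] //= lt_i lt_j; first by rewrite !bilinxx Bp.
    by have /andP[/eqP -> /eqP ->] := o1 j lt_j; have /andP[_ /eqP ->] := o2 j lt_j.
  have /andP[/eqP Bi1 _] := o1 i lt_i; have /andP[/eqP Bi2 /eqP Bi3] := o2 i lt_i.
  by rewrite !(bilinC (P`_i).1) !(bilinC (P`_i).2) Bi1 Bi2 Bi3.
  exact: IH.
elim: P => [|p P IH] //= H; have [_ _ /= ->] := H 0%N 0%N isT isT.
rewrite eqxx IH => [|i j lt_i lt_j] /=; last exact: (H i.+1 j.+1).
rewrite andbT; apply/andP; split; apply/(all_nthP 0) => j lt_j; rewrite /orth_pair.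
  by have [/= -> _ ->] := H 0%N j.+1 isT lt_j.
have [/= _ -> _] := H 0%N j.+1 isT lt_j; have [/= _ _ Bj] := H j.+1 0%N lt_j isT.
by rewrite bilinC Bj eqxx.
Qed.

Lemma of_types_nseq (c : bool) P :
  of_types (nseq (size P) c) P = all (fun p => (Q p.1 == c%:R) && (Q p.2 == c%:R)) P.
Proof. by elim: P => //= p P ->. Qed.

Lemma hyperbolic_pairsP n (e f : 'I_n -> V) :
  (forall i j, [/\ Q (e i) = 0, Q (f i) = 0, B (e i) (e j) = 0, B (f i) (f j) = 0
                 & B (e i) (f j) = (i == j)%:R]) <->
  symplectic [seq (e i, f i) | i <- enum 'I_n] /\
  of_types (nseq n false) [seq (e i, f i) | i <- enum 'I_n].
Proof.
set P := [seq _ | i <- _]; have sizeP : size P = n by rewrite size_map size_enum_ord.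
have nthP (i : 'I_n) : P`_i = (e i, f i) by rewrite (nth_map i) ?size_enum_ord ?nth_ord_enum.
rewrite -[in nseq n _]sizeP of_types_nseq.
split=> [H | [/symplecticP sP /(all_nthP 0) tP] i j].
  split; [apply/symplecticP | apply/(all_nthP 0)]; rewrite sizeP.
    move=> i j lt_i lt_j; rewrite (nthP (Ordinal lt_i)) (nthP (Ordinal lt_j)).
    by have [_ _ -> -> ->] := H (Ordinal lt_i) (Ordinal lt_j).
  move=> i lt_i; rewrite (nthP (Ordinal lt_i)).
  by have [-> -> _ _ _] := H (Ordinal lt_i) (Ordinal lt_i); rewrite eqxx.
rewrite sizeP in sP tP; have /andP[/eqP Qe /eqP Qf] := tP i (ltn_ord i).
by have [] := sP i j (ltn_ord i) (ltn_ord j); rewrite !nthP in Qe Qf *.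
Qed.

Definition has_pairs_of_type t := exists P, symplectic P /\ of_types t P.

Lemma has_pairs_parity t t' : size t = size t' ->
  odd (count id t) = odd (count id t') -> has_pairs_of_type t <-> has_pairs_of_type t'.
Proof.
move=> size_tt' parity_tt'.
have retype_exists u u' : retype u u' -> has_pairs_of_type u -> has_pairs_of_type u'.
  by move=> uu' [P [sP tP]]; have [P' []] := uu' P sP tP; exists P'.
by split; apply/retype_exists/(retype_parity (size t)).
Qed.

Lemma nth_pairs_enum (P : seq (V * V)) :
  [seq ((P`_i).1, (P`_i).2) | i : 'I_(size P) <- enum 'I_(size P)] = P.
Proof.
by rewrite (map_nth_enum_ord 0 (fun p => (p.1, p.2))) -[RHS]map_id; apply: eq_map => -[].
Qed.

Lemma hyperbolic_pairs {r} : \dim (fullv : {vspace V}) = (2 * r)%N ->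
  qf_hyperbolic Q <-> has_pairs_of_type (nseq r false).
Proof.
move=> dimV; split=> [[n [e [f [bef /hyperbolic_pairsP[sP tP]]]]] | [P [sP tP]]].
  suff <- : n = r by exists [seq (e i, f i) | i <- enum 'I_n].
  by move: (size_basis_of bef); rewrite size_cat !size_map -enumT size_enum_ord dimV; lia.
have sizeP : size P = r by rewrite -(of_types_size tP) size_nseq.
exists (size P), (fun i => (P`_i).1), (fun i => (P`_i).2); split.
  rewrite (map_nth_enum_ord 0 fst) (map_nth_enum_ord 0 snd) basis_of_free ?free_symplectic //.
  by rewrite size_cat !size_map sizeP dimV addnn mul2n.
by apply/hyperbolic_pairsP; rewrite nth_pairs_enum sizeP.
Qed.

Lemma orth_pair_enum n (e f : 'I_n -> V) w :
  (forall i, B (e i) w = 0 /\ B (f i) w = 0) ->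
  all (orth_pair w) [seq (e i, f i) | i <- enum 'I_n].
Proof.
move=> ef_w; rewrite all_map; apply/allP => i _; have [wei wfi] := ef_w i.
by rewrite /orth_pair /= bilinC wei bilinC wfi eqxx.
Qed.

Lemma elliptic_pairs {r} : (0 < r)%N -> \dim (fullv : {vspace V}) = (2 * r)%N ->
  qf_elliptic Q <-> has_pairs_of_type (true :: nseq r.-1 false).
Proof.
move=> r_gt0 dimV; split.
  move=> [n [e [f [x [y [bef [/hyperbolic_pairsP[sP tP] [ef_xy [Qx [Qy Bxy]]]]]]]]]].
  have -> : r.-1 = n.
    move: (size_basis_of bef).
    by rewrite !size_cat !size_map -enumT size_enum_ord dimV /=; lia.
  exists ((x, y) :: [seq (e i, f i) | i <- enum 'I_n]); split=> /=.
    rewrite Bxy eqxx sP andbT /=.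
    by apply/andP; split; apply: orth_pair_enum => i; have [] := ef_xy i.
  by rewrite Qx Qy !eqxx.
case=> -[|[x y] P] [//= /and4P[/eqP Bxy ox oy sP] /andP[/andP[/eqP Qx /eqP Qy] tP]].
have sizeP : size P = r.-1 by rewrite -(of_types_size tP) size_nseq.
exists (size P), (fun i => (P`_i).1), (fun i => (P`_i).2), x, y; split.
  rewrite (map_nth_enum_ord 0 fst) (map_nth_enum_ord 0 snd).
  rewrite -(perm_basis _ (_ : perm_eq (map fst ((x, y) :: P) ++ map snd ((x, y) :: P)) _)).
    apply: basis_of_free; first by apply: free_symplectic; rewrite /= Bxy eqxx ox oy.
    by rewrite size_cat !size_map /= sizeP prednK // addnn -mul2n dimV.
  by rewrite perm_sym catA perm_catC /= perm_cons -cat1s perm_catCA.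
split; first by apply/hyperbolic_pairsP; rewrite nth_pairs_enum sizeP.
have orth_nth w : all (orth_pair w) P ->
    forall i : 'I_(size P), B (P`_i).1 w = 0 /\ B (P`_i).2 w = 0.
  move=> /(all_nthP 0) wP i; have /andP[/eqP wi1 /eqP wi2] := wP i (ltn_ord i).
  by rewrite bilinC wi1 bilinC wi2.
by split=> // i; have [? ?] := orth_nth x ox i; have [? ?] := orth_nth y oy i.
Qed.

Lemma symmetric_basis_pairs {r} : \dim (fullv : {vspace V}) = (2 * r)%N ->
  has_symmetric_basis Q <-> has_pairs_of_type (alternating false r).
Proof.
move=> dimV; split=> [[s [bs [Qs Bs]]] | [P [sP tP]]].
  have fs : sym_family false s by apply/sym_familyP.
  have [P [sP tP _]] := sym_family_pairs false r s (etrans (size_basis_of bs) dimV) fs.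
  by exists P.
have sizeP : size P = r by rewrite -(of_types_size tP) size_alternating.
rewrite -sizeP in tP; have [s [sizes fs _]] := pairs_sym_family false P sP tP.
exists s; have /sym_familyP[Qs Bs] := fs; split=> //.
apply: basis_of_free; last by rewrite sizes sizeP dimV.
by apply: (free_sym_family false s fs); rewrite sizes mul2n odd_double.
Qed.

End QuadraticFormF2.

Lemma odd_half_mod4 r : odd r./2 = ((r %% 4 == 2) || (r %% 4 == 3))%N.
Proof.
have -> : odd r./2 = (r %/ 2 %% 2 == 1)%N by rewrite -divn2 modn2; case: odd.
by apply/idP/idP; lia.
Qed.

Lemma count_alternating c n : count id (alternating c n) = (n + c)./2.
Proof.
by elim: n c => [|n IH] [] //=; rewrite IH /= ?addn0 ?addn1 ?addnS.
Qed.

Theorem theorem3p5 (V : vectType 'F_2) (r : nat) (Q : V -> 'F_2) :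
  (1 <= r)%N -> \dim (fullv : {vspace V}) = (2 * r)%N ->
  is_quadratic_form Q -> qf_nondegenerate Q ->
  (has_symmetric_basis Q <->
     (qf_hyperbolic Q /\ (r %% 4 = 0 \/ r %% 4 = 1)%N) \/
     (qf_elliptic Q /\ (r %% 4 = 2 \/ r %% 4 = 3)%N)).
Proof.
move=> r_gt0 dimV qfQ _.
rewrite (symmetric_basis_pairs qfQ dimV) (hyperbolic_pairs qfQ dimV).
rewrite (elliptic_pairs qfQ r_gt0 dimV).
have arf_alt : odd (count id (alternating false r)) = odd r./2.
  by rewrite count_alternating addn0.
have := odd_half_mod4 r; case: (odd r./2) arf_alt => arf_alt /esym r_mod4.
  rewrite (has_pairs_parity qfQ (alternating false r) (true :: nseq r.-1 false)).
  - by split=> [E|[[_ r01]|[]//]]; [right; split=> //; lia | lia].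
  - by rewrite size_alternating /= size_nseq prednK.
  - by rewrite arf_alt /= count_nseq mul0n.
rewrite (has_pairs_parity qfQ (alternating false r) (nseq r false)).
- by split=> [H|[[]//|[_ r23]]]; [left; split=> //; lia | lia].
- by rewrite size_alternating size_nseq.
- by rewrite arf_alt count_nseq mul0n.
Qed.
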